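(* Let $G$ be an infinite discrete countable group, $(X,G)$ a $G$-system with metric $d$, $\gamma\in(0,1)$ and $K\in\mathbb{N}\setminus\{1\}$. Assume there is $\epsilon>0$ such that for every $M\in\mathbb{N}$ and all nonempty open subsets $U_1,\dots,U_M$ of $X$ there exist $g\in G$, $\mathcal{M}\subset\{1,\dots,M\}$ and points $x_{m,k}\in U_m$ for $k\in\{1,\dots,K\}$, $m\in\mathcal{M}$, such that (1) $|\mathcal{M}|\ge(1-\gamma)M$; (2) $d(gx_{m,k},gx_{m,k'})>\epsilon$ for all $1\le k<k'\le K$ and $m\in\mathcal{M}$. Then $h^*_{top}(X,G)\ge\log((1-\gamma)K)$.
   Context: A $G$-system is a compact metric space $(X,d)$ on which $G$ acts by homeomorphisms. For a sequence $\mathcal{A}=(g_n)$ in $G$ and a finite open cover $\mathcal{U}$, $h_{top}^{\mathcal{A}}(G,\mathcal{U})=\limsup_n\frac1n\log N(\bigvee_{i=1}^ng_i^{-1}\mathcal{U})$ ($N$ = minimal cardinality of a subcover), $h^{\mathcal{A}}_{top}(X,G)=\sup_{\mathcal{U}}h^{\mathcal{A}}_{top}(G,\mathcal{U})$, and $h^*_{top}(X,G)=\sup_{\mathcal{A}}h^{\mathcal{A}}_{top}(X,G)$ over all sequences in $G$. *)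

From HB Require Import structures.
From mathcomp Require Import all_boot all_order all_algebra.
From mathcomp Require Import all_classical all_reals.
From mathcomp Require Import ereal topology normedtype sequences exp.
Set Implicit Arguments. Unset Strict Implicit. Unset Printing Implicit Defensive.
Import Order.TTheory GRing.Theory Num.Theory.
Local Open Scope classical_set_scope.
Local Open Scope ring_scope.

Section Defs.
Variable R : realType.

Definition is_metric (X : Type) (d : X -> X -> R) : Prop :=
  (forall x y, 0 <= d x y) /\ (forall x y, d x y = 0 <-> x = y) /\
  (forall x y, d x y = d y x) /\ (forall x y z, d x z <= d x y + d y z).

Definition open_d (X : Type) (d : X -> X -> R) (U : set X) : Prop :=
  forall x, U x -> exists e : R, 0 < e /\ forall y, d x y < e -> U y.

Definition compact_d (X : Type) (d : X -> X -> R) : Prop :=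
  forall (I : Type) (F : I -> set X), (forall i, open_d d (F i)) ->
    (forall x, exists i, F i x) ->
    exists (n : nat) (f : nat -> I), forall x, exists k, (k < n)%N /\ F (f k) x.

Definition continuous_d (X : Type) (d : X -> X -> R) (f : X -> X) : Prop :=
  forall U, open_d d U -> open_d d (f @^-1` U).

Definition is_group (G : Type) (mul : G -> G -> G) (inv : G -> G) (one : G) : Prop :=
  (forall a b c, mul a (mul b c) = mul (mul a b) c) /\
  (forall a, mul one a = a) /\ (forall a, mul a one = a) /\
  (forall a, mul (inv a) a = one) /\ (forall a, mul a (inv a) = one).

(* G acts on X by homeomorphisms (continuity of each act g suffices,
   since act (inv g) is a continuous inverse) *)
Definition is_action (G X : Type) (d : X -> X -> R) (mul : G -> G -> G) (one : G)
  (act : G -> X -> X) : Prop :=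
  (forall x, act one x = x) /\
  (forall g h x, act (mul g h) x = act g (act h x)) /\
  (forall g, continuous_d d (act g)).

Definition fin_open_cover (X : Type) (d : X -> X -> R) (U : set (set X)) : Prop :=
  finite_set U /\ (forall V, U V -> open_d d V) /\ (forall x, exists V, U V /\ V x).

Definition Ncov (X : Type) (V : set (set X)) : R :=
  inf [set (n%:R : R) | n in [set n : nat | exists F : nat -> set X,
         (forall i, (i < n)%N -> V (F i)) /\
         (forall x, exists i, (i < n)%N /\ F i x)]].

(* \bigvee_{i=1}^n g_i^{-1} U, with g_1, ..., g_n = A 0, ..., A (n-1) *)
Definition join_cover (G X : Type) (act : G -> X -> X) (A : nat -> G)
  (U : set (set X)) (n : nat) : set (set X) :=
  [set W | exists f : nat -> set X, (forall i, (i < n)%N -> U (f i)) /\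
     W = \bigcap_(i in [set i : nat | (i < n)%N]) (act (A i) @^-1` f i)].

Definition hA_cover (G X : Type) (act : G -> X -> X) (A : nat -> G)
  (U : set (set X)) : \bar R :=
  limn_esup (fun n : nat =>
    ((ln (Ncov (join_cover act A U n.+1)) / (n.+1)%:R)%:E)).

Definition hA_top (G X : Type) (d : X -> X -> R) (act : G -> X -> X) (A : nat -> G)
  : \bar R :=
  ereal_sup [set hA_cover act A U | U in [set U | fin_open_cover d U]].

Definition hstar_top (G X : Type) (d : X -> X -> R) (act : G -> X -> X) : \bar R :=
  ereal_sup [set hA_top d act A | A in [set: nat -> G]].

End Defs.

(* Fix a finite open cover U by sets of diameter < eps/2.  Given a finite family
   of nonempty open sets, the hypothesis yields g and, in a (1-gamma)-fraction of
   the members, K points whose g-images are eps-apart; intersecting each member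
   with the g-preimages of eps/4-balls around these images gives a family
   (1-gamma)K times larger whose members are eps/2-apart under g or lie in
   distinct members of the old family.  Iterating from {X} produces one sequence
   (g_i) and families of size ((1-gamma)K)^n any two members of which are
   eps/2-apart at some time i < n; an element of \bigvee_{i<n} g_i^{-1} U meets
   at most one of them, so N(\bigvee_{i<n} g_i^{-1} U) >= ((1-gamma)K)^n. *)

From HB Require Import structures.
From mathcomp Require Import all_boot all_order all_algebra.
From mathcomp Require Import all_classical all_reals.
From mathcomp Require Import ereal topology normedtype sequences exp.
From mathcomp Require Import lra.
Set Implicit Arguments. Unset Strict Implicit. Unset Printing Implicit Defensive.
Import Order.TTheory GRing.Theory Num.Theory.
Local Open Scope classical_set_scope.
Local Open Scope ring_scope.

Section MetricSpace.
Variables (R : realType) (X : Type) (d : X -> X -> R).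
Hypothesis dm : is_metric d.

Lemma metric_refl x : d x x = 0.
Proof. by case: dm => _ [/(_ x x) [_ ->]]. Qed.

Lemma metric_sym x y : d x y = d y x.
Proof. by case: dm => _ [_ []]. Qed.

Lemma metric_triangle x y z : d x z <= d x y + d y z.
Proof. by case: dm => _ [_ [_]]. Qed.

Definition ball_d (x : X) (r : R) : set X := [set y | d x y < r].

Lemma ball_d_center x r : 0 < r -> ball_d x r x.
Proof. by rewrite /ball_d /= metric_refl. Qed.

Lemma open_d_ball x r : open_d d (ball_d x r).
Proof.
move=> y /= dxy; exists (r - d x y); split; first by rewrite subr_gt0.
move=> z dyz; apply: le_lt_trans (metric_triangle x y z) _; lra.
Qed.

Lemma ball_d_dist x r y z : ball_d x r y -> ball_d x r z -> d y z < 2 * r.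
Proof.
rewrite /ball_d /= => dxy dxz.
have := metric_triangle y x z; rewrite (metric_sym y x); lra.
Qed.

Lemma dist_lt_balls a b s y z :
  ball_d a s y -> ball_d b s z -> d a b < d y z + 2 * s.
Proof.
rewrite /ball_d /= => ay bz.
have := metric_triangle a y b; have := metric_triangle y z b.
rewrite (metric_sym z b); lra.
Qed.

Lemma open_dI (A B : set X) : open_d d A -> open_d d B -> open_d d (A `&` B).
Proof.
move=> oA oB x [Ax Bx].
have [e1 [e10 sA]] := oA x Ax; have [e2 [e20 sB]] := oB x Bx.
exists (Order.min e1 e2); split; first by rewrite lt_min e10 e20.
by move=> y; rewrite lt_min => /andP[y1 y2]; split; [exact: sA|exact: sB].
Qed.

Lemma open_d_bigcap n (P : nat -> set X) :
  (forall i, (i < n)%N -> open_d d (P i)) ->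
  open_d d (\bigcap_(i in [set i | (i < n)%N]) P i).
Proof.
elim: n P => [|n IH] P oP.
  by move=> x _; exists 1; split => // y _ i.
rewrite bigcap_mkord big_ord_recr /= -bigcap_mkord.
apply: open_dI; last exact: oP.
by apply: IH => i lt_in; apply: oP; rewrite ltnS ltnW.
Qed.

Lemma compact_d_small_cover (e : R) : compact_d d -> 0 < e ->
  exists U, fin_open_cover d U /\
    forall V, U V -> forall y z, V y -> V z -> d y z < e.
Proof.
move=> cpt e0; have e20 : 0 < e / 2 by rewrite divr_gt0.
have [p [c Hc]] := cpt X (fun x => ball_d x (e / 2)) (open_d_ball ^~ _)
  (fun x => ex_intro (fun c => ball_d c (e / 2) x) x (ball_d_center x e20)).
exists ((fun k => ball_d (c k) (e / 2)) @` `I_p); split.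
  split; first exact/finite_image/finite_II.
  split; first by move=> V [k _ <-]; exact: open_d_ball.
  move=> x; have [k [kp ckx]] := Hc x.
  by exists (ball_d (c k) (e / 2)); split => //; exists k.
move=> V [k _ <-] y z cky ckz; have := ball_d_dist cky ckz; lra.
Qed.

End MetricSpace.

(* [compact_d] hands out finite subcovers as maps [nat -> I], so the index type
   of every open cover, and hence [X], is inhabited. *)
Lemma compact_d_inhabited (R : realType) (X : Type) (d : X -> X -> R) :
  compact_d d -> inhabited X.
Proof.
move=> cpt; apply: contrapT => nX.
have [n [f _]] := cpt False (fun i => match i with end) (fun i => match i with end)
  (fun x => False_ind _ (nX (inhabits x))).
by case: (f 0%N).
Qed.

Section CoverNumber.
Variables (R : realType) (X : Type) (d : X -> X -> R).

Definition has_subcover (V : set (set X)) (n : nat) : Prop :=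
  exists F : nat -> set X, (forall i, (i < n)%N -> V (F i)) /\
    (forall x, exists i, (i < n)%N /\ F i x).

Lemma compact_d_has_subcover (V : set (set X)) : compact_d d ->
  (forall W, V W -> open_d d W) -> (forall x, exists W, V W /\ W x) ->
  exists n, has_subcover V n.
Proof.
move=> cpt oV covV.
have [n [F HF]] := cpt {W | V W} sval (fun W => oV _ (svalP W))
  (fun x => let: ex_intro W (conj VW Wx) := covV x in ex_intro _ (exist _ W VW) Wx).
by exists n, (sval \o F); split => [i _|x]; [exact: svalP|exact: HF].
Qed.

Lemma has_subcover_ge_card (V : set (set X)) (T : finType) (P : T -> set X) n :
  (forall t, P t !=set0) ->
  (forall W, V W -> forall t t' y z, W y -> W z -> P t y -> P t' z -> t = t') ->
  has_subcover V n -> (#|T| <= n)%N.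
Proof.
move=> P0 Vsep [F [VF covF]].
have /choice [h hh] : forall t, exists i : 'I_n, exists2 y, P t y & F i y.
  move=> t; have [y Pty] := P0 t; have [i [lt_in Fiy]] := covF y.
  by exists (Ordinal lt_in), y.
rewrite -[n]card_ord; apply: (leq_card h) => t t' htt'.
have [y Pty Fy] := hh t; have [z Ptz Fz] := hh t'.
by apply: (Vsep _ (VF _ (ltn_ord (h t))) t t' y z) => //; rewrite htt'.
Qed.

Lemma Ncov_ge_card (V : set (set X)) (T : finType) (P : T -> set X) :
  compact_d d -> (forall W, V W -> open_d d W) -> (forall x, exists W, V W /\ W x) ->
  (forall t, P t !=set0) ->
  (forall W, V W -> forall t t' y z, W y -> W z -> P t y -> P t' z -> t = t') ->
  #|T|%:R <= Ncov R V.
Proof.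
move=> cpt oV covV P0 Vsep; apply: lb_le_inf.
  by have [n Vn] := compact_d_has_subcover cpt oV covV; exists n%:R, n.
by move=> _ [n Vn <-]; rewrite ler_nat (has_subcover_ge_card P0 Vsep).
Qed.

End CoverNumber.

Section JoinCover.
Variables (R : realType) (G X : Type) (d : X -> X -> R) (act : G -> X -> X).
Variables (A : nat -> G) (U : set (set X)) (n : nat).

Lemma join_cover_open : (forall g, continuous_d d (act g)) ->
  (forall V, U V -> open_d d V) ->
  forall W, join_cover act A U n W -> open_d d W.
Proof.
move=> act_cont oU W [f [Uf ->]].
by apply: open_d_bigcap => i lt_in; apply: act_cont; apply: oU; exact: Uf.
Qed.

Lemma join_cover_covers : (forall x, exists V, U V /\ V x) ->
  forall x, exists W, join_cover act A U n W /\ W x.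
Proof.
move=> covU x; have /choice [f Hf] := fun i => covU (act (A i) x).
exists (\bigcap_(i in [set i | (i < n)%N]) (act (A i) @^-1` f i)); split.
  by exists f; split => // i _; case: (Hf i).
by move=> i _; case: (Hf i).
Qed.

Lemma join_cover_small (e : R) :
  (forall V, U V -> forall y z, V y -> V z -> d y z < e) ->
  forall W, join_cover act A U n W -> forall y z i, W y -> W z -> (i < n)%N ->
  d (act (A i) y) (act (A i) z) < e.
Proof.
move=> smallU W [f [Uf ->]] y z i Wy Wz lt_in.
exact: smallU (Uf i lt_in) _ _ (Wy i lt_in) (Wz i lt_in).
Qed.

End JoinCover.

Record family (X : Type) := Family { fam_idx : finType; fam_set :> fam_idx -> set X }.

Section Separation.
Variables (R : realType) (G X : Type) (d : X -> X -> R) (act : G -> X -> X).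

Definition nonempty_open_family (F : family X) : Prop :=
  forall t, F t !=set0 /\ open_d d (F t).

Lemma nonempty_open_family_setT : inhabited X ->
  nonempty_open_family (@Family X unit (fun=> setT)).
Proof. by move=> [x0] t; split; [exists x0|move=> x _; exists 1]. Qed.

Definition orbit_separated (A : nat -> G) (r : R) (n : nat) (F : family X) : Prop :=
  forall t t', t != t' -> forall y z, F t y -> F t' z ->
    exists2 i, (i < n)%N & r < d (act (A i) y) (act (A i) z).

Definition separating_refinement (g : G) (r : R) (F F' : family X) : Prop :=
  exists pi : fam_idx F' -> fam_idx F, (forall t, F' t `<=` F (pi t)) /\
    forall t t', t != t' -> pi t = pi t' -> forall y z, F' t y -> F' t' z ->
      r < d (act g y) (act g z).

Lemma orbit_separated_refine (A : nat -> G) r n (F F' : family X) :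
  orbit_separated A r n F -> separating_refinement (A n) r F F' ->
  orbit_separated A r n.+1 F'.
Proof.
move=> sepF [pi [subF' sepF']] t t' tt' y z F'y F'z.
have [pitt'|pitt'] := eqVneq (pi t) (pi t').
  by exists n => //; exact: sepF' pitt' y z F'y F'z.
have [i lt_in ri] := sepF _ _ pitt' y z (subF' t y F'y) (subF' t' z F'z).
by exists i => //; rewrite ltnS ltnW.
Qed.

Lemma orbit_separated_Ncov (A : nat -> G) (U : set (set X)) r n (F : family X) :
  compact_d d -> (forall g, continuous_d d (act g)) -> fin_open_cover d U ->
  (forall V, U V -> forall y z, V y -> V z -> d y z < r) ->
  nonempty_open_family F -> orbit_separated A r n F ->
  #|fam_idx F|%:R <= Ncov R (join_cover act A U n).
Proof.
move=> cpt act_cont [_ [oU covU]] smallU F0 sepF.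
have openJ := join_cover_open (A := A) (n := n) act_cont oU.
have sepJ W : join_cover act A U n W ->
    forall t t' y z, W y -> W z -> F t y -> F t' z -> t = t'.
  move=> JW t t' y z Wy Wz Fy Fz.
  apply/eqP/negPn/negP => /sepF /(_ y z Fy Fz) [i lt_in].
  by apply/negP; rewrite -leNgt ltW // (join_cover_small smallU JW Wy Wz lt_in).
exact: Ncov_ge_card cpt openJ (join_cover_covers act A n covU)
  (fun t => proj1 (F0 t)) sepJ.
Qed.

End Separation.

Section Spreading.
Variables (R : realType) (G X : Type) (d : X -> X -> R) (act : G -> X -> X).
Variables (gamma : R) (K : nat) (eps : R).
Hypothesis dm : is_metric d.
Hypothesis act_cont : forall g, continuous_d d (act g).
Hypothesis eps0 : 0 < eps.

Definition spreading : Prop :=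
  forall (M : nat) (U : 'I_M -> set X),
    (forall m, U m !=set0 /\ open_d d (U m)) ->
    exists (g : G) (MM : {set 'I_M}) (x : 'I_M -> 'I_K -> X),
      (1 - gamma) * M%:R <= (#|MM|)%:R /\
      (forall m, m \in MM -> forall k, U m (x m k)) /\
      (forall m, m \in MM -> forall k k' : 'I_K, (k < k')%N ->
         eps < d (act g (x m k)) (act g (x m k'))).

Hypothesis spread : spreading.

Lemma spreading_refinement (F : family X) : nonempty_open_family d F ->
  exists (g : G) (F' : family X), [/\ nonempty_open_family d F',
    (1 - gamma) * K%:R * #|fam_idx F|%:R <= #|fam_idx F'|%:R &
    separating_refinement d act g (eps / 2) F F'].
Proof.
move=> F0; pose V (m : 'I_#|fam_idx F|) := F (enum_val m).
have [g [MM [x [cardMM [Vx sepx]]]]] := spread (U := V) (fun m => F0 (enum_val m)).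
have eps4 : 0 < eps / 4 by rewrite divr_gt0.
pose F' := Family (fun q : {m | m \in MM} * 'I_K =>
  V (val q.1) `&` act g @^-1` ball_d d (act g (x (val q.1) q.2)) (eps / 4)).
exists g, F'; split.
- move=> [[m Mm] k]; split.
    by exists (x m k); split; [exact: Vx|exact: ball_d_center].
  by apply: open_dI; [case: (F0 (enum_val m))|apply: act_cont; exact: open_d_ball].
- rewrite /= card_prod card_sig card_ord natrM mulrAC.
  by rewrite ler_wpM2r // (eq_card (fun m => erefl (m \in MM))) -card_ord.
exists (fun q => enum_val (val q.1)); split; first by move=> q y [].
move=> [[m Mm] k] [[m' Mm'] k'] qq' /= /enum_val_inj mm' y z [_ By] [_ Bz].
subst m'; have kk' : k != k'.
  by apply: contraNneq qq' => <-; rewrite (bool_irrelevance Mm' Mm).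
have far : eps < d (act g (x m k)) (act g (x m k')).
  case: (ltngtP k k') => [lt_kk'|lt_k'k|/val_inj eq_kk']; first exact: sepx.
    by rewrite metric_sym //; exact: sepx.
  by rewrite eq_kk' eqxx in kk'.
have := dist_lt_balls dm By Bz; lra.
Qed.

Lemma spreading_orbit_separated : inhabited X -> gamma <= 1 ->
  exists (A : nat -> G) (S : nat -> family X), forall n,
    [/\ nonempty_open_family d (S n),
        ((1 - gamma) * K%:R) ^+ n <= #|fam_idx (S n)|%:R &
        orbit_separated d act A (eps / 2) n (S n)].
Proof.
move=> [x0] gamma_le1; set c := (1 - gamma) * K%:R.
pose valid := {F : family X | nonempty_open_family d F}.
have /choice [next Hnext] : forall F : valid, exists q : G * valid,
    c * #|fam_idx (sval F)|%:R <= #|fam_idx (sval q.2)|%:R /\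
    separating_refinement d act q.1 (eps / 2) (sval F) (sval q.2).
  move=> [F F0]; have [g [F' [F'0 cardF' refF']]] := spreading_refinement F0.
  by exists (g, exist _ F' F'0).
pose top : valid := exist _ _ (nonempty_open_family_setT d (inhabits x0)).
pose S n := iter n (fun F => (next F).2) top.
exists (fun n => (next (S n)).1), (fun n => sval (S n)).
elim=> [|n [_ cardSn sepSn]]; split.
- exact: svalP.
- by rewrite expr0 card_unit.
- by move=> [] [].
- exact: svalP.
- rewrite exprS (le_trans _ (Hnext (S n)).1) // ler_wpM2l //.
  by rewrite /c mulr_ge0 // subr_ge0.
- exact: orbit_separated_refine sepSn (Hnext (S n)).2.
Qed.

End Spreading.

Lemma limn_esup_ge (R : realType) (u : (\bar R)^nat) (a : \bar R) :
  (forall n, (a <= u n)%E) -> (a <= limn_esup u)%E.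
Proof.
move=> au; rewrite limn_esup_lim; apply: lime_ge; first exact: is_cvg_esups.
by apply: nearW => m; apply: (le_trans (au m)); apply: ereal_sup_ubound; exists m => /=.
Qed.

Lemma hstar_top_ge (R : realType) (G X : Type) (d : X -> X -> R) (act : G -> X -> X)
    (A : nat -> G) (U : set (set X)) (a : R) :
  fin_open_cover d U ->
  (forall n, a <= ln (Ncov R (join_cover act A U n.+1)) / n.+1%:R) ->
  (a%:E <= hstar_top d act)%E.
Proof.
move=> Ucover aN.
apply: (@le_trans _ _ (hA_top d act A)); last by apply: ereal_sup_ubound; exists A.
apply: (@le_trans _ _ (hA_cover R act A U)); last by apply: ereal_sup_ubound; exists U.
by apply: limn_esup_ge => n; rewrite lee_fin.
Qed.

Lemma ln_le_growth_rate (R : realType) (c N : R) n :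
  0 < c -> c ^+ n.+1 <= N -> ln c <= ln N / n.+1%:R.
Proof.
move=> c0 cN; have cn0 : 0 < c ^+ n.+1 by rewrite exprn_gt0.
rewrite ler_pdivlMr // mulr_natr -lnXn // ler_ln ?posrE //.
exact: lt_le_trans cN.
Qed.

Theorem proposition3p1 (R : realType) (G : Type) (mul : G -> G -> G) (inv : G -> G)
  (one : G) (X : Type) (d : X -> X -> R) (act : G -> X -> X)
  (gamma : R) (K : nat) :
  is_group mul inv one ->
  infinite_set [set: G] -> countable [set: G] ->
  is_metric d -> compact_d d -> is_action d mul one act ->
  0 < gamma < 1 -> (1 < K)%N ->
  (exists eps : R, 0 < eps /\
    forall (M : nat) (U : 'I_M -> set X),
      (forall m, U m !=set0 /\ open_d d (U m)) ->
      exists (g : G) (MM : {set 'I_M}) (x : 'I_M -> 'I_K -> X),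
        (1 - gamma) * M%:R <= (#|MM|)%:R /\
        (forall m, m \in MM -> forall k, U m (x m k)) /\
        (forall m, m \in MM -> forall k k' : 'I_K, (k < k')%N ->
           eps < d (act g (x m k)) (act g (x m k')))) ->
  ((ln ((1 - gamma) * K%:R))%:E <= hstar_top d act)%E.
Proof.
move=> _ _ _ dm cpt [_ [_ act_cont]] /andP[_ gamma_lt1] K_gt1 [eps [eps0 spread]].
have c0 : 0 < (1 - gamma) * K%:R by rewrite mulr_gt0 ?subr_gt0 // ltr0n ltnW.
have [U [Ucover smallU]] := compact_d_small_cover dm cpt (divr_gt0 eps0 (ltr0n _ 2)).
have [A [S HS]] := spreading_orbit_separated dm act_cont eps0 spread
  (compact_d_inhabited cpt) (ltW gamma_lt1).
apply: (hstar_top_ge Ucover) => n; have [S0 cardS sepS] := HS n.+1.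
apply: ln_le_growth_rate c0 (le_trans cardS _).
exact: orbit_separated_Ncov cpt act_cont Ucover smallU S0 sepS.
Qed.
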